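(* Let $n\ge 5$ be even and let $x,y$ be adjacent vertices of $Q_n$ with $f_n(x)+f_n(y)=\operatorname{str}_{f_n}(Q_n)$. If $x$ and $y$ both begin with $11$, then $$\operatorname{str}_{f_n}(Q_n)\le \operatorname{str}_{f_{n-2}}(Q_{n-2})+3\cdot 2^{n-2}+\binom{n-3}{\lceil (n-3)/2\rceil}+\binom{n-2}{\lceil (n-2)/2\rceil}.$$
   Context: $Q_n$ is the $n$-dimensional hypercube: vertices are the $n$-bit strings, adjacent iff they differ in exactly one position. For a bijection $f:V(G)\to\{1,\dots,|V(G)|\}$, $\operatorname{str}_f(G)=\max\{f(u)+f(v):uv\in E(G)\}$. An $n$-bit string is $x_1\cdots x_n$, $x_i\in\{0,1\}$; its weight is its number of $1$s. Lexicographic order: $x<y$ if for some $k$, $x_j=y_j$ for $j<k$ and $x_k<y_k$. $S_n^i$ is the sequence of $n$-bit strings of weight $i$ in increasing lexicographic order; $R_n^i$ is the same set in decreasing lexicographic order. $S_n$ is the concatenation $(R_n^1,R_n^3,\dots,R_n^{n-1},S_n^n,S_n^{n-2},\dots,S_n^2,S_n^0)$ for even $n$ and $(R_n^1,R_n^3,\dots,R_n^{n-2},R_n^n,S_n^{n-1},\dots,S_n^2,S_n^0)$ for odd $n$; $f_n$ maps the string in position $j$ of $S_n$ to $j$. *)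

From mathcomp Require Import all_boot.
Set Implicit Arguments. Unset Strict Implicit. Unset Printing Implicit Defensive.

(* n-bit strings are lists of booleans of length n; false = 0, true = 1. *)

Fixpoint bitstrings (n : nat) : seq (seq bool) :=
  if n is m.+1 then [seq false :: s | s <- bitstrings m] ++ [seq true :: s | s <- bitstrings m]
  else [:: [::]].

Definition weight (s : seq bool) : nat := count id s.

Definition S_ni (n i : nat) : seq (seq bool) := [seq s <- bitstrings n | weight s == i].
Definition R_ni (n i : nat) : seq (seq bool) := rev (S_ni n i).

(* For even n this is (R^1,...,R^{n-1},S^n,...,S^0); for odd n it is
   (R^1,...,R^{n-2},R^n,S^{n-1},...,S^0). *)
Definition S_seq (n : nat) : seq (seq bool) :=
  flatten [seq R_ni n i | i <- iota 0 n.+1 & odd i] ++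
  flatten [seq S_ni n i | i <- rev (iota 0 n.+1) & ~~ odd i].

Definition f (n : nat) (x : seq bool) : nat := (index x (S_seq n)).+1.

Definition adj (x y : seq bool) : bool :=
  (size x == size y) && (count (fun p => p.1 != p.2) (zip x y) == 1).

Definition str (n : nat) : nat :=
  \max_(x <- bitstrings n) \max_(y <- bitstrings n | adj x y) (f n x + f n y).

From mathcomp Require Import all_boot zify.
Set Implicit Arguments. Unset Strict Implicit. Unset Printing Implicit Defensive.

(* Prefixing 11 keeps the parity of the weight, so an edge x y of Q_(n-2) with
   x of even weight w stays an edge between an even block S^(w+2) and an odd
   block R^(w+2 +- 1) of S_n.  The rank of 11x in its block differs from that
   of x by binomial masses, and Pascal's rule applied twice turns the shift of
   f_n against f_(n-2) into parity-restricted partial sums of 'C(n-2, j): the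
   even endpoint gains 3 * 2^(n-2) minus such sums, the odd endpoint gains them
   back with the parities swapped.  The net remainder is an alternating partial
   sum of 'C(n-2, j), which telescopes to a single 'C(n-3, w), plus
   'C(n-2, w+1) when the odd endpoint is the heavier one; both are bounded by
   the central binomial coefficients. *)

Lemma cons_inj (b : bool) : injective (cons b).
Proof. by move=> ? ? []. Qed.

Lemma cons_notin_map_negb (b : bool) s t : (b :: s \in map (cons (~~ b)) t) = false.
Proof. by case: b; apply/mapP => -[]. Qed.

Lemma mem_bitstrings n s : (s \in bitstrings n) = (size s == n).
Proof.
elim: n s => [|n IHn] [|b s] //=; rewrite mem_cat.
  by apply/negP => /orP[] /mapP[].
rewrite eqSS -IHn; case: b.
  by rewrite (cons_notin_map_negb true) (mem_map (@cons_inj true)).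
by rewrite (cons_notin_map_negb false) (mem_map (@cons_inj false)) orbF.
Qed.

Lemma mem_S_ni n i s : (s \in S_ni n i) = (size s == n) && (weight s == i).
Proof. by rewrite mem_filter mem_bitstrings andbC. Qed.

Lemma mem_R_ni n i s : (s \in R_ni n i) = (size s == n) && (weight s == i).
Proof. by rewrite mem_rev mem_S_ni. Qed.

Lemma S_ni_S0 n : S_ni n.+1 0 = map (cons false) (S_ni n 0).
Proof.
rewrite /S_ni /= filter_cat !filter_map.
by rewrite [X in _ ++ map _ X](@eq_filter _ _ pred0) // filter_pred0 cats0.
Qed.

Lemma S_ni_SS n i :
  S_ni n.+1 i.+1 = map (cons false) (S_ni n i.+1) ++ map (cons true) (S_ni n i).
Proof. by rewrite /S_ni /= filter_cat !filter_map. Qed.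

Lemma size_S_ni n i : size (S_ni n i) = 'C(n, i).
Proof.
elim: n i => [|n IHn] [|i] //; first by rewrite S_ni_S0 size_map IHn !bin0.
by rewrite S_ni_SS size_cat !size_map !IHn binS.
Qed.

Lemma size_R_ni n i : size (R_ni n i) = 'C(n, i).
Proof. by rewrite size_rev size_S_ni. Qed.

Lemma index_S_ni_true2 m w x :
  index [:: true, true & x] (S_ni m.+2 w.+2) =
  'C(m, w.+2) + 2 * 'C(m, w.+1) + index x (S_ni m w).
Proof.
have index_true_cons i y : index (true :: y) (S_ni m.+1 i.+1) = 'C(m, i.+1) + index y (S_ni m i).
  by rewrite S_ni_SS index_cat (cons_notin_map_negb true) size_map size_S_ni (index_map (@cons_inj true)).
by rewrite S_ni_SS index_cat (cons_notin_map_negb true) size_map size_S_ni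
  (index_map (@cons_inj true)) index_true_cons binS; lia.
Qed.

Lemma index_R_ni_true m w x : size x = m -> weight x = w ->
  index (true :: x) (R_ni m.+1 w.+1) = index x (R_ni m w).
Proof.
move=> size_x weight_x; rewrite /R_ni S_ni_SS rev_cat -!map_rev index_cat.
rewrite (mem_map (@cons_inj true)) mem_rev mem_S_ni size_x weight_x !eqxx.
exact: index_map (@cons_inj true) _ _.
Qed.

Lemma index_R_ni_true2 m w x : size x = m -> weight x = w ->
  index [:: true, true & x] (R_ni m.+2 w.+2) = index x (R_ni m w).
Proof.
move=> size_x weight_x.
by rewrite (@index_R_ni_true m.+1 w.+1) ?(@index_R_ni_true m w) //= ?size_x ?weight_x.
Qed.

Definition bin_parsum (b : bool) (N k : nat) := \sum_(0 <= j < k | odd j == b) 'C(N, j).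

Lemma bin_parsum0 b N : bin_parsum b N 0 = 0.
Proof. by rewrite /bin_parsum big_geq. Qed.

Lemma bin_parsumS b N k :
  bin_parsum b N k.+1 = bin_parsum b N k + (if odd k == b then 'C(N, k) else 0).
Proof. by rewrite /bin_parsum big_mkcond big_nat_recr //= -big_mkcond. Qed.

Lemma bin_parsum_full N : bin_parsum false N N.+1 + bin_parsum true N N.+1 = 2 ^ N.
Proof.
have -> : 2 ^ N = \sum_(0 <= j < N.+1) 'C(N, j).
  rewrite big_mkord -(add1n 1) expnDn.
  by apply: eq_bigr => j _; rewrite !exp1n !muln1.
rewrite (bigID odd) addnC; congr (_ + _); apply: eq_bigl => j; by case: odd.
Qed.

Lemma bin_parsumSS b N k :
  bin_parsum b N.+2 k.+2 = bin_parsum b N k.+2 + 2 * bin_parsum (~~ b) N k.+1 + bin_parsum b N k.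
Proof.
elim: k => [|k IHk].
  by rewrite !bin_parsumS !bin_parsum0 /= !bin0 !bin1; case: b => /=; lia.
rewrite bin_parsumS IHk !(bin_parsumS _ _ k.+2) !(bin_parsumS _ _ k.+1) !(bin_parsumS _ _ k).
by rewrite !binS /=; clear IHk; case: (odd k); case: b => /=; lia.
Qed.

Lemma bin_parsum_alt p k :
  bin_parsum (odd k) p.+1 k.+1 = bin_parsum (~~ odd k) p.+1 k.+1 + 'C(p, k).
Proof.
elim: k => [|k IHk]; first by rewrite !bin_parsumS !bin_parsum0 /= !bin0.
rewrite !(bin_parsumS _ _ k.+1) binS /= negbK eqxx.
by move: IHk; case: (odd k) => /=; lia.
Qed.

Lemma leq_bin_succ n k : k.*2 < n -> 'C(n, k) <= 'C(n, k.+1).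
Proof.
move=> lt_2k_n; rewrite -(leq_pmul2l (ltn0Sn k)) mul_bin_left.
by rewrite leq_mul2r; apply/orP; right; lia.
Qed.

Lemma leq_bin_central n k : 'C(n, k) <= 'C(n, n.+1./2).
Proof.
have half_le : n.+1./2.*2 <= n.+1 by rewrite -divn2; lia.
have half_ge : n <= n.+1./2.*2 by rewrite -divn2; lia.
have up_mono : {in [pred i | i <= n.+1./2] &, {homo binomial n : i j / i <= j}}.
  apply: homo_leq_in => [//|j i l|i j _ le_j_half l /andP[_ /ltnW]|i _].
  - exact: leq_trans.
  - by rewrite inE in le_j_half *; move/leq_trans; apply.
  by rewrite inE => le_Si_half; apply: leq_bin_succ; lia.
have [le_k_half | lt_half_k] := leqP k n.+1./2; first by apply: up_mono; rewrite ?inE.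
have [le_k_n | lt_n_k] := leqP k n; last by rewrite bin_small.
by rewrite -bin_sub //; apply: up_mono; rewrite ?inE; lia.
Qed.

Lemma index_flatten_map_cat (I : Type) (T : eqType) (B : I -> seq T) s1 i s2 x :
  x \in B i -> all (fun j => x \notin B j) s1 ->
  index x (flatten [seq B j | j <- s1 ++ i :: s2]) =
  sumn [seq size (B j) | j <- s1] + index x (B i).
Proof.
move=> x_in; elim: s1 => [|j s1 IHs1] /=; first by rewrite index_cat x_in.
by case/andP=> /negbTE x_notin /IHs1 {}IHs1; rewrite index_cat x_notin IHs1 addnA.
Qed.

Lemma iota0_split N i : i <= N -> iota 0 N.+1 = iota 0 i ++ i :: iota i.+1 (N - i).
Proof. by move=> le_iN; rewrite -[N.+1](subnKC (leqW le_iN)) iotaD subSn. Qed.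

Lemma f_odd_weight N x : size x = N -> odd (weight x) ->
  f N x = (bin_parsum true N (weight x) + index x (R_ni N (weight x))).+1.
Proof.
move=> size_x; move wE : (weight x) => w odd_w.
have le_wN : w <= N by rewrite -size_x -wE count_size.
have x_in : x \in R_ni N w by rewrite mem_R_ni size_x wE !eqxx.
rewrite /f /S_seq index_cat ifT; last first.
  by apply/flatten_mapP; exists w; rewrite // mem_filter odd_w mem_iota; lia.
rewrite (iota0_split le_wN) filter_cat /= odd_w index_flatten_map_cat //.
  rewrite sumnE big_map big_filter /bin_parsum /index_iota subn0.
  by congr (_ + _).+1; apply: eq_big => [j|j _]; rewrite ?eqb_id ?size_R_ni.
apply/allP => j; rewrite mem_filter mem_iota mem_R_ni => /andP[_ lt_jw].
by apply/negP => /andP[_ /eqP w_eq]; rewrite -wE w_eq ltnn in lt_jw.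
Qed.

(* Additive form of f N x = 2^N - (even-weight mass up to weight x) + rank + 1:
   the even blocks come last, in decreasing weight. *)
Lemma f_even_weight N x : size x = N -> ~~ odd (weight x) ->
  f N x + bin_parsum false N (weight x).+1 = (2 ^ N + index x (S_ni N (weight x))).+1.
Proof.
move=> size_x; move wE : (weight x) => w even_w.
have le_wN : w <= N by rewrite -size_x -wE count_size.
have x_in : x \in S_ni N w by rewrite mem_S_ni size_x wE !eqxx.
rewrite /f /S_seq index_cat ifF; last first.
  apply/flatten_mapP => -[j]; rewrite mem_filter mem_R_ni => /andP[odd_j _] /andP[_ /eqP w_eq].
  by rewrite -wE w_eq odd_j in even_w.
have -> : size (flatten [seq R_ni N j | j <- iota 0 N.+1 & odd j]) = bin_parsum true N N.+1.
  rewrite size_flatten /shape -map_comp sumnE big_map big_filter /bin_parsum /index_iota subn0.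
  by apply: eq_big => [j|j _]; rewrite ?eqb_id //= size_R_ni.
rewrite (iota0_split le_wN) rev_cat /= rev_cons cat_rcons filter_cat /= even_w.
rewrite index_flatten_map_cat //; last first.
  apply/allP => j; rewrite mem_filter mem_rev mem_iota mem_S_ni => /andP[_ /andP[lt_wj _]].
  by apply/negP => /andP[_ /eqP w_eq]; rewrite -wE w_eq ltnn in lt_wj.
have tail_sum : sumn [seq size (S_ni N j) | j <- rev (iota w.+1 (N - w)) & ~~ odd j] +
    bin_parsum false N w.+1 = bin_parsum false N N.+1.
  rewrite sumnE big_map big_filter big_rev /bin_parsum [RHS](@big_cat_nat _ _ _ w.+1) //= addnC.
  by congr (_ + _); rewrite /index_iota subSS; apply: eq_big => [j|j _]; rewrite ?size_S_ni //; case: odd.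
rewrite -bin_parsum_full -tail_sum.
by move: (sumn _) => tail; lia.
Qed.

Lemma f_true2_odd m y : size y = m -> odd (weight y) ->
  f m.+2 [:: true, true & y] =
  f m y + bin_parsum true m (weight y).+1 + 2 * bin_parsum false m (weight y).+1.
Proof.
move=> size_y; move wE : (weight y) => v odd_v.
have weight_y2 : weight [:: true, true & y] = v.+2 by rewrite -wE.
rewrite (f_odd_weight size_y) wE // (@f_odd_weight m.+2); last 2 first.
- by rewrite /= size_y.
- by rewrite weight_y2 /= negbK.
rewrite weight_y2 index_R_ni_true2 // bin_parsumSS.
by rewrite (bin_parsumS _ _ v.+1) (bin_parsumS _ _ v) /= odd_v /=; lia.
Qed.

Lemma f_true2_even m x : size x = m -> ~~ odd (weight x) ->
  f m.+2 [:: true, true & x] + bin_parsum false m (weight x).+1 +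
  2 * bin_parsum true m (weight x).+1 = f m x + 3 * 2 ^ m.
Proof.
move=> size_x; move wE : (weight x) => w even_w.
have weight_x2 : weight [:: true, true & x] = w.+2 by rewrite -wE.
have := @f_even_weight m.+2 [:: true, true & x]; rewrite weight_x2 /= size_x even_w.
move=> /(_ erefl isT); rewrite index_S_ni_true2 bin_parsumSS expnS expnS.
have := f_even_weight size_x; rewrite wE => /(_ even_w).
rewrite (bin_parsumS _ _ w.+2) (bin_parsumS _ _ w.+1) (bin_parsumS true _ w.+1) /= (negbTE even_w) /=.
lia.
Qed.

Lemma adj_cons (a : bool) x y : adj (a :: x) (a :: y) = adj x y.
Proof. by rewrite /adj /= eqSS eqxx add0n. Qed.

Lemma adj_sym x y : adj x y = adj y x.
Proof.
rewrite /adj eq_sym; congr (_ && (_ == _)).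
by elim: x y => [|a x IHx] [|b y] //=; rewrite IHx eq_sym.
Qed.

Lemma eq_zip_mismatch0 (x y : seq bool) : size x = size y ->
  count (fun p => p.1 != p.2) (zip x y) = 0 -> x = y.
Proof.
elim: x y => [|a x IHx] [|b y] //= [size_xy].
by case: eqP => [-> /(IHx _ size_xy) ->|].
Qed.

Lemma adj_weight x y : adj x y ->
  weight y = (weight x).+1 \/ weight x = (weight y).+1.
Proof.
elim: x y => [|a x IHx] [|b y] //; rewrite /adj /= eqSS => /andP[/eqP size_xy].
have adj_xy : count (fun p => p.1 != p.2) (zip x y) = 1 -> adj x y.
  by move=> c1; rewrite /adj size_xy eqxx c1.
case: a; case: b => /= /eqP; rewrite ?add0n ?add1n.
- by move/adj_xy/IHx; rewrite /weight /=; lia.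
- by move=> [/(eq_zip_mismatch0 size_xy) ->]; right.
- by move=> [/(eq_zip_mismatch0 size_xy) ->]; left.
by move/adj_xy/IHx; rewrite /weight /=; lia.
Qed.

Lemma adj_odd_weight x y : adj x y -> odd (weight y) = ~~ odd (weight x).
Proof. by case/adj_weight => ->; rewrite /= ?negbK. Qed.

Lemma leq_f_str m x y : size x = m -> size y = m -> adj x y -> f m x + f m y <= str m.
Proof.
move=> size_x size_y adj_xy; rewrite /str.
have x_in : x \in bitstrings m by rewrite mem_bitstrings size_x.
have y_in : y \in bitstrings m by rewrite mem_bitstrings size_y.
apply: leq_trans (@leq_bigmax_seq _ _ (adj x) (fun y => f m x + f m y) _ y_in adj_xy) _.
exact: (@leq_bigmax_seq _ _ xpredT (fun x => \max_(y <- bitstrings m | adj x y) (f m x + f m y)) _ x_in).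
Qed.

Lemma f_true2_adj_le p x y : size x = p.+1 -> size y = p.+1 -> adj x y ->
  ~~ odd (weight x) ->
  f p.+3 [:: true, true & x] + f p.+3 [:: true, true & y] <=
  f p.+1 x + f p.+1 y + 3 * 2 ^ p.+1 + 'C(p, weight x) + 'C(p.+1, (weight x).+1).
Proof.
move=> size_x size_y adj_xy even_x.
have odd_y : odd (weight y) by rewrite (adj_odd_weight adj_xy).
have := f_true2_even size_x even_x; have := f_true2_odd size_y odd_y.
have := bin_parsum_alt p (weight x); rewrite (negbTE even_x) /=.
case: (adj_weight adj_xy) => ->.
  by rewrite !(bin_parsumS _ _ (weight x).+1) /= (negbTE even_x) /=; lia.
by rewrite !(bin_parsumS _ _ (weight y).+1) /= odd_y /=; lia.
Qed.

Lemma f_true2_adj_le_central p x y : size x = p.+1 -> size y = p.+1 -> adj x y ->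
  f p.+3 [:: true, true & x] + f p.+3 [:: true, true & y] <=
  f p.+1 x + f p.+1 y + 3 * 2 ^ p.+1 + 'C(p, p.+1./2) + 'C(p.+1, p.+2./2).
Proof.
wlog even_x : x y / ~~ odd (weight x) => [wlog_even|] size_x size_y adj_xy.
  have [odd_x|] := boolP (odd (weight x)); last by move/wlog_even; apply.
  rewrite addnC [f p.+1 x + _]addnC; apply: wlog_even; rewrite // 1?adj_sym //.
  by rewrite (adj_odd_weight adj_xy) odd_x.
have := f_true2_adj_le size_x size_y adj_xy even_x.
have := leq_bin_central p (weight x); have := leq_bin_central p.+1 (weight x).+1.
lia.
Qed.

Theorem theorem2p6 (n : nat) (x y : seq bool) :
  5 <= n -> ~~ odd n ->
  size x = n -> size y = n -> adj x y ->
  f n x + f n y = str n ->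
  take 2 x = [:: true; true] -> take 2 y = [:: true; true] ->
  str n <= str (n - 2) + 3 * 2 ^ (n - 2)
           + 'C(n - 3, (n - 3).+1./2) + 'C(n - 2, (n - 2).+1./2).
Proof.
case: n => [|[|[|p]]] // _ _; rewrite !subSS !subn0.
case: x => [|a1 [|a2 x]] // [size_x]; case: y => [|b1 [|b2 y]] // [size_y].
move=> + <- [a1E a2E _] [b1E b2E _]; subst; rewrite !adj_cons => adj_xy.
apply: leq_trans (f_true2_adj_le_central size_x size_y adj_xy) _.
by rewrite !leq_add2r leq_f_str.
Qed.
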